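(* One has $w(\bar\alpha_0)=\frac12$, and for all $n\ge1$: $$w(\bar\alpha_n)=-\frac{3}{2^{n+1}(2n-1)!!},\qquad w(\bar Z_{n+1})=-\frac1{2^{n-1}(2n+1)!!}.$$
   Context: $\mathcal A$ is the free associative $\mathbb R$-algebra of noncommutative polynomials in symbols $N$ (degree 1) and $\Delta$ (degree 2). Each $A\in\mathcal A$ homogeneous of degree $\ge1$ is uniquely written $A=\bar AN+\tilde A\Delta$. The weight $w:\mathcal A\to\mathbb R$ is the algebra homomorphism with $w(I)=1$, $w(N)=2$, $w(\Delta)=-1$. Define $R_{kj},S_{kj}$ ($k,j$ integers): $R_{00}=I$, $S_{00}=0$, $R_{kj}=S_{kj}=0$ if $k<0$ or $j<0$, otherwise $R_{kj}=-(N^2+\Delta)R_{k-1,j}+NS_{k-1,j}$, $S_{kj}=\Delta NR_{k-1,j}-\Delta S_{k-1,j}+NR_{k-1,j-1}$. Let $\{a,b\}=\frac{\Gamma(a+b+\frac12)}{(a+b)!\Gamma(a+\frac12)}$, $Z_{n+1}=\sum_{j=0}^n\{n+1,j-1\}R_{n+j,j}$ and $\alpha_n=\sum_{j=0}^{n+1}\{n,j\}S_{n+j,j}$. *)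

From Stdlib Require Import Rdefinitions.
From HB Require Import structures.
From mathcomp Require Import all_boot all_order all_algebra.
From mathcomp Require Import Rstruct.
From mathcomp Require monalg.
From Stdlib Require Reals.
From mathcomp Require Import finmap.
Import monalg.

Set Implicit Arguments.
Unset Strict Implicit.
Unset Printing Implicit Defensive.
Import GRing.Theory.
Local Open Scope ring_scope.

(* The two generating symbols: N (degree 1) and Delta (degree 2). *)
Inductive letter := LN | LD.

Definition letter_to_bool (l : letter) : bool := if l is LN then true else false.
Definition bool_to_letter (b : bool) : letter := if b then LN else LD.
Lemma letter_boolK : cancel letter_to_bool bool_to_letter.
Proof. by case. Qed.
HB.instance Definition _ := Countable.copy letter (can_type letter_boolK).

(* Words in N, Delta (free monoid), and the free associative R-algebra A. *)
Definition word := {fmonom letter}.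
Definition ncA := {malg R[word]}.

Definition gN : ncA := << FMonom [:: LN] >>.
Definition gD : ncA := << FMonom [:: LD] >>.
Definition gI : ncA := 1.

(* Weight: algebra homomorphism with w(I)=1, w(N)=2, w(Delta)=-1,
   i.e. on a word the product of the letter weights, extended linearly. *)
Definition wletter (l : letter) : R := if l is LN then 2 else -1.
Definition wword (k : word) : R := \prod_(l <- fmonom_val k) wletter l.
Definition wt (A : ncA) : R := \sum_(k <- msupp A) A@_k * wword k.

(* Writing A = Abar N + Atilde Delta: Abar collects the words ending in N,
   with that last N removed (the constant term, if any, is ignored). *)
Definition bar_word (k : word) : ncA :=
  match rev (fmonom_val k) with
  | LN :: u => << FMonom (rev u) >>
  | _ => 0
  end.
Definition bar (A : ncA) : ncA := \sum_(k <- msupp A) A@_k *: bar_word k.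

(* (R_{kj}, S_{kj}); indices are naturals, and the terms with j-1 < 0 vanish. *)
Fixpoint RS (k : nat) : nat -> ncA * ncA :=
  match k with
  | 0 => fun j => if j == 0%N then (gI, 0) else (0, 0)
  | k'.+1 => fun j =>
      let p := RS k' j in
      let q := if j is j'.+1 then RS k' j' else (0, 0) in
      (- (gN * gN + gD) * p.1 + gN * p.2,
       gD * gN * p.1 - gD * p.2 + gN * q.1)
  end.
Definition Rkj (k j : nat) : ncA := (RS k j).1.
Definition Skj (k j : nat) : ncA := (RS k j).2.

(* Gamma at half-integers: Gamma(m + 1/2) = (2m)! sqrt(pi) / (4^m m!). *)
Definition Gamma_half (m : nat) : R :=
  ((2 * m)`!)%:R * R_sqrt.sqrt Rtrigo1.PI / ((4 ^ m)%:R * (m`!)%:R).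

(* {a,b} = Gamma(a+b+1/2) / ((a+b)! Gamma(a+1/2)), for a >= 0, b >= -1 with
   a + b >= 0 (the only cases used); b is an integer. *)
Definition brace (a : nat) (b : int) : R :=
  let s := absz (a%:Z + b) in
  Gamma_half s / ((s`!)%:R * Gamma_half a).

(* Z_{n+1} = sum_{j=0}^n {n+1, j-1} R_{n+j,j}, indexed here by n. *)
Definition Zsucc (n : nat) : ncA :=
  \sum_(0 <= j < n.+1) brace n.+1 (j%:Z - 1) *: Rkj (n + j) j.

Definition alpha (n : nat) : ncA :=
  \sum_(0 <= j < n.+2) brace n j%:Z *: Skj (n + j) j.

(* Double factorial m!! (with 0!! = 1, and (-1)!! = 1 via m <= 0). *)
Fixpoint dfact (m : nat) : nat :=
  match m with
  | 0 => 1
  | 1 => 1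
  | (m'.+2) as m2 => (m2 * dfact m')%N
  end.

From Stdlib Require Import Rdefinitions.
From HB Require Import structures.
From mathcomp Require Import all_boot all_order all_algebra.
From mathcomp Require Import Rstruct.
From mathcomp Require monalg.
From mathcomp Require Import finmap ring zify.
Import monalg.
Import GRing.Theory Num.Theory.
Local Open Scope ring_scope.

(* Both the weight [w] and the functional [A |-> w(bar A)] are linear and are
   computed letter by letter: left multiplication by N or Delta multiplies [w]
   by 2 or -1, and acts in the same way on [w o bar], except that N also adds
   the constant term.  Hence the weights of R_{kj}, S_{kj} and of their bar
   parts obey a linear recursion in k.  Solving it, the weights of R_{kj} and
   S_{kj} are coefficients of (-1 - 2x)^k, and w(bar R_{k+1,j}) is half the
   increment w(R_{k+1,j}) - w(R_{kj}) (likewise for S).  Writing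
   {a,b} = c_{a+b} / (c_a a!) with c_k = C(2k,k)/4^k, the sums defining alpha_n
   and Z_{n+1} reduce to sum_k (-1)^k C(2k,k) C(k,2k-m) = (-2)^m, which is the
   coefficient of x^m in (1 - (1+x)^2)^m = (-x)^m (2+x)^m, and to a companion
   sum obtained from it by Pascal's rule. *)

(** * Linear functionals on the free algebra *)

Definition wsum (h : word -> R) : ncA -> R := mmap idfun h.

Lemma wsum0 h : wsum h 0 = 0.
Proof. exact: mmap0. Qed.

Lemma wsumD h : {morph wsum h : A B / A + B}.
Proof. exact: mmapD. Qed.

Lemma wsumN h : {morph wsum h : A / - A}.
Proof. exact: mmapN. Qed.

Lemma wsumB h : {morph wsum h : A B / A - B}.
Proof. exact: mmapB. Qed.

Lemma wsum_sum h (I : Type) (r : seq I) (P : pred I) (F : I -> ncA) :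
  wsum h (\sum_(i <- r | P i) F i) = \sum_(i <- r | P i) wsum h (F i).
Proof. exact: raddf_sum. Qed.

Lemma wsumZ h c A : wsum h (c *: A) = c * wsum h A.
Proof.
rewrite /wsum (mmapEw (msuppZ_le c A)) mulr_sumr; apply: eq_bigr => k _.
by rewrite mcoeffZ mulrA.
Qed.

Lemma wsumU h c m : wsum h << c *g m >> = c * h m.
Proof. exact: mmapU. Qed.

Lemma wsum1 h : wsum h 1 = h (FMonom [::]).
Proof. by rewrite -fmoneE wsumU mul1r. Qed.

Lemma eq_wsum h1 h2 : h1 =1 h2 -> wsum h1 =1 wsum h2.
Proof. by move=> eh A; apply: eq_bigr => k _; rewrite eh. Qed.

Lemma wsum_add h1 h2 A : wsum (fun k => h1 k + h2 k) A = wsum h1 A + wsum h2 A.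
Proof. by rewrite /wsum !mmapE -big_split; apply: eq_bigr => k _; rewrite mulrDr. Qed.

Lemma wsum_scale a h A : wsum (fun k => a * h k) A = a * wsum h A.
Proof. by rewrite /wsum !mmapE mulr_sumr; apply: eq_bigr => k _; rewrite mulrCA. Qed.

Lemma wsum_zero A : wsum (fun=> 0) A = 0.
Proof. by rewrite /wsum mmapE big1 // => k _; rewrite mulr0. Qed.

(* Kept opaque: unification would otherwise unfold products in [ncA], which
   makes rewriting with the lemmas below prohibitively slow. *)
Fact lmul_subproof :
  {lmul : letter -> ncA -> ncA | forall l A, lmul l A = << FMonom [:: l] >> * A}.
Proof. by exists (fun l A => << FMonom [:: l] >> * A). Qed.

Definition lmul : letter -> ncA -> ncA := sval lmul_subproof.

Lemma lmulE l A : lmul l A = << FMonom [:: l] >> * A.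
Proof. exact: (svalP lmul_subproof). Qed.

Lemma wsum_lmul h l A : wsum h (lmul l A) = wsum (fun k => h (FMonom (l :: k))) A.
Proof.
rewrite lmulE malgME msuppU1 big_seq_fset1 wsum_sum; apply: eq_bigr => k _.
rewrite wsumU mcoeffU1 eqxx mul1r; congr (_ * h _).
by apply/eqP; rewrite fmP fmM.
Qed.

Definition barw (k : word) : R := wt (bar_word k).
Definition nilw (k : word) : R := (nilp k)%:R.

Lemma wt_wsum A : wt A = wsum wword A.
Proof. by []. Qed.

Lemma wt_bar A : wt (bar A) = wsum barw A.
Proof. by rewrite wt_wsum wsum_sum; apply: eq_bigr => k _; rewrite wsumZ. Qed.

Lemma wword_cons l s : wword (FMonom (l :: s)) = wletter l * wword (FMonom s).
Proof. by rewrite /wword big_cons. Qed.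

Lemma barw_cons l s :
  barw (FMonom (l :: s)) = wletter l * barw (FMonom s) + (if l is LN then nilw (FMonom s) else 0).
Proof.
rewrite /barw /nilw /bar_word /= !wt_wsum; case/lastP: s => [|s x].
  by case: l; rewrite /= ?wsumU wsum0 /wword ?big_nil mulr0 ?add0r ?addr0 ?mul1r.
rewrite -rcons_cons !rev_rcons /= (_ : nilp (rcons s x) = false); last by case: s.
case: x; last by rewrite wsum0 mulr0 add0r; case: l.
rewrite !revK !wsumU !mul1r wword_cons.
by case: l; rewrite ?addr0.
Qed.

(* [wletter] is written with Stdlib real numerals; restate it in ring numerals. *)
Lemma wletterN : wletter LN = 2.
Proof. by []. Qed.

Lemma wletterD : wletter LD = -1.
Proof. by []. Qed.

Lemma wt_lmul l A : wsum wword (lmul l A) = wletter l * wsum wword A.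
Proof. by rewrite wsum_lmul -wsum_scale; apply: eq_wsum => k; rewrite wword_cons. Qed.

Lemma barw_lmul l A :
  wsum barw (lmul l A) = wletter l * wsum barw A + (if l is LN then wsum nilw A else 0).
Proof.
rewrite wsum_lmul -wsum_scale; case: l.
  by rewrite -wsum_add; apply: eq_wsum => k; rewrite barw_cons.
by rewrite addr0; apply: eq_wsum => k; rewrite barw_cons addr0.
Qed.

Lemma nilw_lmul l A : wsum nilw (lmul l A) = 0.
Proof. by rewrite wsum_lmul -(wsum_zero A). Qed.

(** * Weights of R_{kj} and S_{kj} *)

Lemma RkjS k j :
  Rkj k.+1 j = - (lmul LN (lmul LN (Rkj k j)) + lmul LD (Rkj k j)) + lmul LN (Skj k j).
Proof. by rewrite !lmulE mulrA -mulrDl -mulNr. Qed.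

Lemma SkjS k j : Skj k.+1 j = lmul LD (lmul LN (Rkj k j)) - lmul LD (Skj k j)
  + lmul LN (if j is j'.+1 then Rkj k j' else 0).
Proof. by case: j => [|j]; rewrite !lmulE mulrA. Qed.

Lemma Rkj0 j : Rkj 0 j = (j == 0)%:R.
Proof. by rewrite /Rkj /=; case: j. Qed.

Lemma Skj0 j : Skj 0 j = 0.
Proof. by rewrite /Skj /=; case: j. Qed.

Definition wR k j := wsum wword (Rkj k j).
Definition wS k j := wsum wword (Skj k j).
Definition bR k j := wsum barw (Rkj k j).
Definition bS k j := wsum barw (Skj k j).
Definition cR k j := wsum nilw (Rkj k j).

Lemma cR0 j : cR 0 j = (j == 0)%:R.
Proof. by rewrite /cR Rkj0; case: j => [|j]; rewrite ?wsum1 ?wsum0. Qed.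

Lemma cRS k j : cR k.+1 j = 0.
Proof. by rewrite /cR RkjS wsumD wsumN wsumD !nilw_lmul !addr0 oppr0. Qed.

Lemma nilw_Skj k j : wsum nilw (Skj k j) = 0.
Proof.
case: k => [|k]; first by rewrite Skj0 wsum0.
by rewrite SkjS wsumD wsumB !nilw_lmul subrr add0r.
Qed.

Lemma wR0 j : wR 0 j = (j == 0)%:R.
Proof. by rewrite /wR Rkj0; case: j => [|j]; rewrite ?wsum1 ?wsum0 // /wword big_nil. Qed.

Lemma wS0 j : wS 0 j = 0.
Proof. by rewrite /wS Skj0 wsum0. Qed.

Lemma bR0 j : bR 0 j = 0.
Proof.
by rewrite /bR Rkj0; case: j => [|j]; rewrite ?wsum1 ?wsum0 // /barw /bar_word wt_wsum wsum0.
Qed.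

Lemma bS0 j : bS 0 j = 0.
Proof. by rewrite /bS Skj0 wsum0. Qed.

Lemma wRS k j : wR k.+1 j = -3 * wR k j + 2 * wS k j.
Proof. by rewrite /wR /wS RkjS wsumD wsumN wsumD !wt_lmul wletterN wletterD; ring. Qed.

Lemma wSS k j : wS k.+1 j = -2 * wR k j + wS k j + 2 * (if j is j'.+1 then wR k j' else 0).
Proof.
rewrite /wR /wS SkjS wsumD wsumB !wt_lmul wletterN wletterD.
by case: j => [|j]; rewrite ?mulr0 ?wsum0; ring.
Qed.

Lemma bRS k j : bR k.+1 j = -3 * bR k j + 2 * bS k j - 2 * cR k j.
Proof.
rewrite /bR /bS /cR RkjS wsumD wsumN wsumD !barw_lmul wletterN wletterD /=.
by rewrite nilw_lmul nilw_Skj; ring.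
Qed.

Lemma bSS k j : bS k.+1 j = -2 * bR k j + bS k j - cR k j
  + (if j is j'.+1 then 2 * bR k j' + cR k j' else 0).
Proof.
rewrite /bR /bS /cR SkjS wsumD wsumB !barw_lmul wletterN wletterD /=.
by case: j => [|j]; rewrite ?mulr0 ?wsum0; ring.
Qed.

Definition binz (k : nat) (m : int) : R := (if m is Posz i then 'C(k, i)%:R else 0)%R.

(* The coefficient of x^m in (-1 - 2x)^k. *)
Definition coef (k : nat) (m : int) : R := ((-1) ^+ k * binz k m * 2 ^+ absz m)%R.

Lemma binz_lt0 k (m : int) : m < 0 -> binz k m = 0.
Proof. by case: m. Qed.

Lemma binz_gt k (m : int) : k%:Z < m -> binz k m = 0.
Proof. by case: m => // i; rewrite ltz_nat => /bin_small /= ->. Qed.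

Lemma binzS k (m : int) : binz k.+1 m = binz k m + binz k (m - 1).
Proof.
case: m => [[|i]|i]; last by rewrite (@binz_lt0 _ (_ - 1)) ?addr0.
  by rewrite (@binz_lt0 _ (_ - 1)) // addr0 /binz !bin0.
by rewrite (_ : i.+1%:Z - 1 = i); [rewrite /binz binS natrD addrC | lia].
Qed.

Lemma coef_lt0 k (m : int) : m < 0 -> coef k m = 0.
Proof. by move=> m_lt0; rewrite /coef binz_lt0 // mulr0 mul0r. Qed.

Lemma coef0 (m : int) : coef 0 m = (m == 0)%:R.
Proof. by case: m => [[|i]|i]; rewrite /coef /= ?bin0n ?mulr0 ?mul0r ?mul1r ?mulr1. Qed.

Lemma coefS k (m : int) : coef k.+1 m = - coef k m - 2 * coef k (m - 1).
Proof.
rewrite /coef binzS exprS; case: (ltrP 0 m) => [m_gt0|m_le0].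
  have [i ->] : exists i : nat, m = i.+1%:Z by exists (absz m).-1; lia.
  rewrite (_ : i.+1%:Z - 1 = i) /=; last by lia.
  by rewrite exprS; ring.
by rewrite (@binz_lt0 _ (m - 1)); [ring | lia].
Qed.

Lemma wR_wS_coef k j :
  wR k j = coef k (2 * j%:Z) + coef k (2 * j%:Z + 1) /\
  wS k j = coef k (2 * j%:Z + 1) - coef k (2 * j%:Z - 1).
Proof.
elim: k j => [|k IH] j.
  rewrite wR0 wS0 !coef0.
  have -> : (2 * j%:Z == 0) = (j == 0%N) by lia.
  have -> : (2 * j%:Z + 1 == 0) = false by lia.
  have -> : (2 * j%:Z - 1 == 0) = false by lia.
  by rewrite !mulr0n addr0 subrr.
have [IHR IHS] := IH j.
rewrite wRS wSS IHR IHS !coefS addrK.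
case: j IHR IHS => [|j] IHR IHS.
  by rewrite (@coef_lt0 k (2 * 0 - 1)) ?(@coef_lt0 k (2 * 0 - 1 - 1)) //; split; ring.
have [IHR' _] := IH j.
rewrite IHR' (_ : 2 * j.+1%:Z - 1 - 1 = 2 * j%:Z); last by lia.
rewrite (_ : 2 * j.+1%:Z - 1 = 2 * j%:Z + 1); last by lia.
by split; ring.
Qed.

Lemma bR_bS_diff k j :
  bR k.+1 j = (wR k.+1 j - wR k j) / 2 /\ bS k.+1 j = (wS k.+1 j - wS k j) / 2.
Proof.
elim: k j => [|k IH] j.
  rewrite bRS bSS wRS wSS bR0 bS0 wR0 wS0 cR0.
  by case: j => [|j]; rewrite ?bR0 ?wR0 ?cR0; split; field.
have [IHR IHS] := IH j.
rewrite (bRS k.+1) (bSS k.+1) cRS IHR IHS (wRS k.+1) (wSS k.+1) (wRS k) (wSS k).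
case: j IHR IHS => [|j] IHR IHS; first by split; field.
have [IHR' _] := IH j.
by rewrite cRS IHR' (wRS k j); split; field.
Qed.

(** * Binomial sums *)

Definition alt_binom_sum (m r : nat) : R :=
  (\sum_(0 <= k < m.+1) (-1) ^+ k * 'C(m, k)%:R * 'C(2 * k, r)%:R)%R.

Lemma alt_binom_sumS m r : alt_binom_sum m.+1 r =
  alt_binom_sum m r - \sum_(0 <= k < m.+1) (-1) ^+ k * 'C(m, k)%:R * 'C((2 * k).+2, r)%:R.
Proof.
rewrite /alt_binom_sum big_nat_recl //.
have -> : \sum_(0 <= k < m.+1) (-1) ^+ k.+1 * 'C(m.+1, k.+1)%:R * 'C(2 * k.+1, r)%:R =
   \sum_(0 <= k < m.+1) ((-1) ^+ k.+1 * 'C(m, k.+1)%:R * 'C(2 * k.+1, r)%:R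
                          - (-1) ^+ k * 'C(m, k)%:R * 'C((2 * k).+2, r)%:R) :> R.
  apply: eq_bigr => k _.
  by rewrite (_ : 2 * k.+1 = (2 * k).+2)%N ?binS ?natrD ?exprS; [ring | lia].
rewrite sumrB addrA; congr (_ - _).
rewrite [in RHS]big_nat_recl // big_nat_recr //= (bin_small (ltnSn m)).
by rewrite ?bin0 ?mulr0n ?mulr0 ?mul0r ?addr0.
Qed.

Lemma alt_binom_sumSS m r : alt_binom_sum m.+1 r.+2 = -2 * alt_binom_sum m r.+1 - alt_binom_sum m r.
Proof.
rewrite alt_binom_sumS /alt_binom_sum mulr_sumr -!sumrB; apply: eq_bigr => k _.
by rewrite !binS !natrD; ring.
Qed.

Lemma alt_binom_sumS1 m : alt_binom_sum m.+1 1 = -2 * alt_binom_sum m 0.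
Proof.
rewrite alt_binom_sumS /alt_binom_sum mulr_sumr -!sumrB; apply: eq_bigr => k _.
by rewrite !bin1 !bin0 -addn2 natrD; ring.
Qed.

Lemma alt_binom_sumS0 m : alt_binom_sum m.+1 0 = 0.
Proof.
rewrite alt_binom_sumS /alt_binom_sum -sumrB big1 // => k _.
by rewrite !bin0 subrr.
Qed.

Lemma alt_binom_sumnn m : alt_binom_sum m m = (-2) ^+ m.
Proof.
suff [] : (forall r, (r < m)%N -> alt_binom_sum m r = 0) /\ alt_binom_sum m m = (-2) ^+ m by [].
elim: m => [|m [IHlt IHnn]].
  by split=> //; rewrite /alt_binom_sum big_nat1 muln0 !bin0n expr0 /= !mul1r.
split=> [[|[|r]] r_lt|]; first exact: alt_binom_sumS0.
- by rewrite alt_binom_sumS1 IHlt ?mulr0.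
- by rewrite alt_binom_sumSS !IHlt ?mulr0 ?subr0 //; lia.
case: m IHlt IHnn => [|m] IHlt IHnn; first by rewrite alt_binom_sumS1 IHnn expr0 expr1 mulr1.
by rewrite alt_binom_sumSS IHnn IHlt // subr0 [in RHS]exprS.
Qed.

Lemma bin_trinomial a b c : (c <= b <= a)%N ->
  ('C(a, b) * 'C(b, c) = 'C(a, c) * 'C(a - c, b - c))%N.
Proof.
case/andP => cb ba; apply/eqP.
rewrite -(eqn_pmul2r (_ : 0 < c`! * (b - c)`! * (a - b)`!)%N); last by rewrite !muln_gt0 !fact_gt0.
have ca : (c <= a)%N := leq_trans cb ba.
have ac_bc : (a - c - (b - c) = a - b)%N by lia.
apply/eqP; transitivity a`!.
  by rewrite -(bin_fact ba) -(bin_fact cb); ring.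
rewrite -(bin_fact ca) -[(a - c)`!](@bin_fact _ (b - c)) ?ac_bc; [ring | lia].
Qed.

Lemma central_binz K m :
  'C(2 * K, K)%:R * binz K (2 * K%:Z - m%:Z) = 'C(m, K)%:R * 'C(2 * K, m)%:R :> R.
Proof.
case: (leqP m (2 * K)) => [m_le|m_gt]; last first.
  by rewrite binz_lt0 ?(bin_small m_gt) ?mulr0 //; lia.
rewrite (_ : 2 * K%:Z - m%:Z = (2 * K - m)%N :> int); last by lia.
rewrite /binz -!natrM; congr _%:R.
case: (leqP K m) => [K_le|K_gt]; last first.
  by rewrite (bin_small K_gt) (@bin_small K (2 * K - m)) ?muln0 //; lia.
have e1 : (2 * K - (2 * K - m) = m)%N by lia.
have e2 : (K - (2 * K - m) = m - K)%N by lia.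
rewrite bin_trinomial; last by lia.
by rewrite e1 e2 !bin_sub // mulnC.
Qed.

Lemma big_nat_tail (V : nmodType) (F : nat -> V) n L :
  (n <= L)%N -> (forall K, (n <= K)%N -> F K = 0) ->
  \sum_(0 <= K < L) F K = \sum_(0 <= K < n) F K.
Proof.
move=> nL F0; rewrite (big_cat_nat _ (n := n)) //=.
have -> : \sum_(n <= K < L) F K = 0.
  by rewrite big_nat_cond big1 // => K /andP [/andP [nK _] _]; exact: F0.
by rewrite addr0.
Qed.

Lemma big_nat_window (V : nmodType) (F : nat -> V) n J : (forall K, (K < n)%N -> F K = 0) ->
  \sum_(0 <= j < J) F (n + j) = \sum_(0 <= K < n + J) F K.
Proof.
move=> F0; rewrite [RHS](big_cat_nat _ (n := n)) ?leq_addr //=.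
have -> : \sum_(0 <= K < n) F K = 0.
  by rewrite big_nat_cond big1 // => K /andP [/andP [_ Kn] _]; exact: F0.
by rewrite add0r (big_addn 0 (n + J) n) addKn; apply: eq_bigr => j _; rewrite addnC.
Qed.

Lemma sum_central_binz m L : (m < L)%N ->
  \sum_(0 <= K < L) (-1) ^+ K * ('C(2 * K, K)%:R * binz K (2 * K%:Z - m%:Z)) = (-2) ^+ m.
Proof.
move=> mL; under eq_bigr do rewrite central_binz.
rewrite (big_nat_tail _ _ _ _ mL) => [|K mK]; last by rewrite bin_small ?mul0r ?mulr0.
by rewrite -alt_binom_sumnn; apply: eq_bigr => K _; rewrite mulrA.
Qed.

Lemma sum_central_binzS p L : (p <= L)%N ->
  \sum_(0 <= K < L) (-1) ^+ K * ('C(2 * K.+1, K.+1)%:R * binz K (2 * K.+1%:Z - p.+1%:Z))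
  = -2 * (-1) ^+ p * (2 ^+ p - 1).
Proof.
elim: p L => [|p IH] L pL.
  rewrite big1 ?expr0 => [|K _]; first by ring.
  by rewrite binz_gt ?mulr0 //; lia.
have pascal K : (-1) ^+ K * ('C(2 * K.+1, K.+1)%:R * binz K (2 * K.+1%:Z - p.+2%:Z)) =
    - ((-1) ^+ K.+1 * ('C(2 * K.+1, K.+1)%:R * binz K.+1 (2 * K.+1%:Z - p.+1%:Z)))
    - (-1) ^+ K * ('C(2 * K.+1, K.+1)%:R * binz K (2 * K.+1%:Z - p.+1%:Z)).
  rewrite binzS (_ : 2 * K.+1%:Z - p.+1%:Z - 1 = 2 * K.+1%:Z - p.+2%:Z :> int); last by lia.
  by rewrite exprS; ring.
rewrite (eq_bigr _ (fun K _ => pascal K)) sumrB sumrN IH; last by lia.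
have shift : \sum_(0 <= K < L.+1) (-1) ^+ K * ('C(2 * K, K)%:R * binz K (2 * K%:Z - p.+1%:Z)) =
    \sum_(0 <= K < L) (-1) ^+ K.+1 * ('C(2 * K.+1, K.+1)%:R * binz K.+1 (2 * K.+1%:Z - p.+1%:Z)).
  by rewrite big_nat_recl // binz_lt0 ?mulr0 ?add0r.
rewrite -shift sum_central_binz // exprNn !exprS; ring.
Qed.

Definition cbin4 (k : nat) : R := ('C(2 * k, k)%:R / 4 ^+ k)%R.

Lemma cbin4_coef a k m : cbin4 a * coef k (2 * a%:Z - m%:Z) =
  (-1) ^+ k * ('C(2 * a, a)%:R * binz k (2 * a%:Z - m%:Z)) / 2 ^+ m.
Proof.
rewrite /cbin4 /coef; case: (leqP m (2 * a)) => [m_le|m_gt]; last first.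
  by rewrite binz_lt0; [ring | lia].
have four : 4 ^+ a = 2 ^+ (2 * a - m) * 2 ^+ m :> R.
  by rewrite -exprD subnK // exprM (_ : 4 = 2 ^+ 2 :> R) // expr2; ring.
rewrite four (_ : absz (2 * a%:Z - m%:Z)%R = (2 * a - m)%N); last by lia.
by field; rewrite !expf_neq0 // pnatr_eq0.
Qed.

Lemma sum_cbin4_coef n m J : (2 * n <= m.+1)%N -> (m < n + J)%N ->
  \sum_(0 <= j < J) cbin4 (n + j) * coef (n + j) (2 * (n + j)%:Z - m%:Z) = (-1) ^+ m.
Proof.
move=> mn mJ; rewrite (big_nat_window _ (fun K => cbin4 K * coef K (2 * K%:Z - m%:Z))).
  under eq_bigr do rewrite cbin4_coef.
  rewrite -mulr_suml sum_central_binz // exprNn; field.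
  by rewrite expf_neq0 // pnatr_eq0.
by move=> K Kn; rewrite coef_lt0 ?mulr0 //; lia.
Qed.

Lemma sum_cbin4S_coef n p J : (2 * n <= p)%N -> (p <= n + J)%N ->
  \sum_(0 <= j < J) cbin4 (n + j).+1 * coef (n + j) (2 * (n + j).+1%:Z - p.+1%:Z)
  = (-1) ^+ p.+1 * (1 - (2 ^+ p)^-1).
Proof.
move=> pn pJ; rewrite (big_nat_window _ (fun K => cbin4 K.+1 * coef K (2 * K.+1%:Z - p.+1%:Z))).
  under eq_bigr do rewrite cbin4_coef.
  rewrite -mulr_suml sum_central_binzS // !exprS; field.
  by rewrite expf_neq0 // pnatr_eq0.
by move=> K Kn; rewrite coef_lt0 ?mulr0 //; lia.
Qed.

(** * The weights of alpha_n and Z_{n+1} *)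

Lemma cbin4_neq0 k : cbin4 k != 0.
Proof.
rewrite /cbin4 mulf_neq0 ?invr_eq0 ?expf_neq0 ?pnatr_eq0 // -lt0n bin_gt0; lia.
Qed.

Lemma Gamma_halfE m : Gamma_half m = cbin4 m * m`!%:R * R_sqrt.sqrt Rtrigo1.PI.
Proof.
rewrite /Gamma_half /cbin4.
have -> : (2 * m)`! = ('C(2 * m, m) * (m`! * m`!))%N.
  rewrite -(bin_fact (_ : m <= 2 * m)%N); last by lia.
  by rewrite (_ : 2 * m - m = m)%N //; lia.
rewrite RdivE !RmultE natrX !natrM; field.
by rewrite expf_neq0 ?pnatr_eq0 // -lt0n fact_gt0.
Qed.

Lemma braceE a b : brace a b = cbin4 (absz (a%:Z + b)) / (cbin4 a * a`!%:R).
Proof.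
have sqrtPI_neq0 : R_sqrt.sqrt Rtrigo1.PI != 0.
  by apply/eqP/RIneq.Rgt_not_eq/R_sqrt.sqrt_lt_R0/Rtrigo1.PI_RGT_0.
rewrite /brace RdivE !RmultE !Gamma_halfE; field.
by rewrite sqrtPI_neq0 !cbin4_neq0 !pnatr_eq0 -!lt0n !fact_gt0.
Qed.

Lemma dfact_gt0 m : (0 < dfact m)%N.
Proof.
suff [] : (0 < dfact m)%N /\ (0 < dfact m.+1)%N by [].
by elim: m => [|m [h1 h2]] //; split => //=; rewrite muln_gt0 h1.
Qed.

Lemma dfact_odd n : dfact (2 * n).+1 = ((2 * n).+1 * dfact (2 * n - 1))%N.
Proof. by case: n => [|n] //; rewrite (_ : (2 * n.+1).+1 = (2 * n.+1 - 1).+2)%N //; lia. Qed.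

Lemma fact_double n : ((2 * n)`! = 2 ^ n * n`! * dfact (2 * n - 1))%N.
Proof.
elim: n => [|n IH] //.
rewrite (_ : 2 * n.+1 = (2 * n).+2)%N; last by lia.
by rewrite (_ : (2 * n).+2 - 1 = (2 * n).+1)%N ?dfact_odd ?factS ?IH ?expnS; [ring | lia].
Qed.

Lemma cbin4_fact n : cbin4 n * n`!%:R = (dfact (2 * n - 1))%:R / 2 ^+ n.
Proof.
have e : ('C(2 * n, n) * n`! = 2 ^ n * dfact (2 * n - 1))%N.
  apply/eqP; rewrite -(eqn_pmul2r (fact_gt0 n)); apply/eqP.
  transitivity (2 * n)`!; last by rewrite fact_double; ring.
  rewrite -(@bin_fact (2 * n) n); last by lia.
  by rewrite (_ : 2 * n - n = n)%N; [ring | lia].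
have four : 4 ^+ n = 2 ^+ n * 2 ^+ n :> R by rewrite -exprMn; congr (_ ^+ _); ring.
rewrite /cbin4 mulrAC -natrM e natrM natrX four.
by field; rewrite expf_neq0 // pnatr_eq0.
Qed.

Lemma wt_bar_alpha n : wt (bar (alpha n)) = \sum_(0 <= j < n.+2) brace n j%:Z * bS (n + j) j.
Proof. by rewrite wt_bar /alpha wsum_sum; apply: eq_bigr => j _; rewrite wsumZ. Qed.

Lemma wt_bar_Zsucc n :
  wt (bar (Zsucc n)) = \sum_(0 <= j < n.+1) brace n.+1 (j%:Z - 1) * bR (n + j) j.
Proof. by rewrite wt_bar /Zsucc wsum_sum; apply: eq_bigr => j _; rewrite wsumZ. Qed.

Lemma sqrN1_even n : (-1) ^+ (2 * n) = 1 :> R.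
Proof. by rewrite exprM sqrrN !expr1n. Qed.

Lemma expr2_double n : 2 ^+ (2 * n) = 2 ^+ n * 2 ^+ n :> R.
Proof. by rewrite -exprD mul2n addnn. Qed.

Lemma wt_bar_alphaS n :
  wt (bar (alpha n.+1)) = - (3 / ((2 ^ n.+2)%:R * (dfact (2 * n.+1 - 1))%:R)).
Proof.
pose c := (2 * (cbin4 n.+1 * n.+1`!%:R))^-1.
have term j : brace n.+1 j%:Z * bS (n.+1 + j) j = c * (
      cbin4 (n.+1 + j) * coef (n.+1 + j) (2 * (n.+1 + j)%:Z - (2 * n).+1%:Z)
    - cbin4 (n.+1 + j) * coef (n.+1 + j) (2 * (n.+1 + j)%:Z - (2 * n).+3%:Z)
    - cbin4 (n.+1 + j) * coef (n + j) (2 * (n.+1 + j)%:Z - (2 * n).+1%:Z)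
    + cbin4 (n.+1 + j) * coef (n + j) (2 * (n.+1 + j)%:Z - (2 * n).+3%:Z)).
  rewrite braceE (_ : absz (n.+1%:Z + j%:Z)%R = n.+1 + j)%N; last by lia.
  rewrite (_ : 2 * (n.+1 + j)%:Z - (2 * n).+1%:Z = 2 * j%:Z + 1 :> int); last by lia.
  rewrite (_ : 2 * (n.+1 + j)%:Z - (2 * n).+3%:Z = 2 * j%:Z - 1 :> int); last by lia.
  have [_ ->] := bR_bS_diff (n + j) j.
  have [_ ->] := wR_wS_coef (n + j).+1 j.
  have [_ ->] := wR_wS_coef (n + j) j.
  rewrite /c !addSn; field.
  by rewrite cbin4_neq0 pnatr_eq0 -lt0n fact_gt0.
rewrite wt_bar_alpha (eq_bigr _ (fun j _ => term j)) -mulr_sumr !big_split /= !sumrN.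
rewrite sum_cbin4_coef ?sum_cbin4_coef ?sum_cbin4S_coef ?sum_cbin4S_coef; try lia.
rewrite /c cbin4_fact (_ : 2 * n.+1 - 1 = (2 * n).+1)%N; last by lia.
rewrite !natrX !exprS sqrN1_even expr2_double; field.
by rewrite pnatr_eq0 -lt0n dfact_gt0 expf_neq0 // pnatr_eq0.
Qed.

Lemma wt_bar_ZsuccS n :
  wt (bar (Zsucc n.+1)) = - (1 / ((2 ^ (n.+1 - 1))%:R * (dfact (2 * n.+1 + 1))%:R)).
Proof.
rewrite (_ : n.+1 - 1 = n)%N; last by lia.
pose c := (2 * (cbin4 n.+2 * n.+2`!%:R))^-1.
have term j : brace n.+2 (j%:Z - 1) * bR (n.+1 + j) j = c * (
      cbin4 (n.+1 + j) * coef (n.+1 + j) (2 * (n.+1 + j)%:Z - (2 * n).+2%:Z)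
    + cbin4 (n.+1 + j) * coef (n.+1 + j) (2 * (n.+1 + j)%:Z - (2 * n).+1%:Z)
    - cbin4 (n.+1 + j) * coef (n + j) (2 * (n.+1 + j)%:Z - (2 * n).+2%:Z)
    - cbin4 (n.+1 + j) * coef (n + j) (2 * (n.+1 + j)%:Z - (2 * n).+1%:Z)).
  rewrite braceE (_ : absz (n.+2%:Z + (j%:Z - 1))%R = n.+1 + j)%N; last by lia.
  rewrite (_ : 2 * (n.+1 + j)%:Z - (2 * n).+2%:Z = 2 * j%:Z :> int); last by lia.
  rewrite (_ : 2 * (n.+1 + j)%:Z - (2 * n).+1%:Z = 2 * j%:Z + 1 :> int); last by lia.
  have [-> _] := bR_bS_diff (n + j) j.
  have [-> _] := wR_wS_coef (n + j).+1 j.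
  have [-> _] := wR_wS_coef (n + j) j.
  rewrite /c !addSn; field.
  by rewrite cbin4_neq0 pnatr_eq0 -lt0n fact_gt0.
rewrite wt_bar_Zsucc (eq_bigr _ (fun j _ => term j)) -mulr_sumr !big_split /= !sumrN.
rewrite sum_cbin4_coef ?sum_cbin4_coef ?sum_cbin4S_coef ?sum_cbin4S_coef; try lia.
rewrite /c cbin4_fact (_ : 2 * n.+2 - 1 = 2 * n.+1 + 1)%N; last by lia.
rewrite !natrX !exprS sqrN1_even expr2_double; field.
by rewrite pnatr_eq0 -lt0n dfact_gt0 expf_neq0 // pnatr_eq0.
Qed.

Lemma wt_bar_alpha0 : wt (bar (alpha 0)) = 1 / 2.
Proof.
rewrite wt_bar_alpha big_nat_recl // big_nat1 !add0n bS0 mulr0 add0r.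
rewrite bSS !bR0 bS0 !cR0 eqxx mulr0n mulr1n braceE (_ : absz (0%:Z + 1%:Z)%R = 1)%N //.
by rewrite /cbin4 muln0 muln1 bin0 bin1 expr0 expr1 fact0; field.
Qed.

Theorem proposition5p2 :
  wt (bar (alpha 0)) = 1 / 2 /\
  (forall n : nat, (1 <= n)%N ->
     wt (bar (alpha n)) = - (3 / ((2 ^ n.+1)%:R * (dfact (2 * n - 1))%:R)) /\
     wt (bar (Zsucc n)) = - (1 / ((2 ^ (n - 1))%:R * (dfact (2 * n + 1))%:R))).
Proof.
split; first exact: wt_bar_alpha0.
by case=> [//|n] _; split; [exact: wt_bar_alphaS | exact: wt_bar_ZsuccS].
Qed.
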